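(* Let $\mathcal{X}$ be a measurable space, $K\ge1$, and let classifiers be measurable maps $\mathcal{X}\to[K]$. Let $\mathcal{B}$ assign to each $x$ a set $\mathcal{B}(x)\subseteq\mathcal{X}$ and let $\mathcal{N}(V)=\{x:\exists x'\in V,\ \mathcal{B}(x)\cap\mathcal{B}(x')\neq\emptyset\}$. Let $Q$ be a probability measure on $\mathcal{X}$ satisfying the $c$-expansion property for a non-increasing $c:[0,1]\to(0,\infty)$, i.e. $Q(\mathcal{N}(S))\ge c(Q(S))Q(S)$ for every measurable $S$. Let $F,H,G_{pl}$ be classifiers, $\gamma_H=c(Q(\{x:G_{pl}(x)\neq H(x)\}))$, and assume $\gamma_H>1$. Let $\mathcal{S}_{\mathcal{B}}(F)=\{x:F(x)=F(x')\ \forall x'\in\mathcal{B}(x)\}$ (similarly for $H$), with complements $\mathcal{S}_{\mathcal{B}}^c(\cdot)$; let $\mathcal{M}(G_{pl})=\{x:G_{pl}(x)\neq H(x)\}$ and $\mathcal{M}_{pl}(F)=\{x:F(x)\neq G_{pl}(x)\}$. Let $q=Q(\mathcal{M}_{pl}(F)\cup\mathcal{S}_{\mathcal{B}}^c(F)\cup\mathcal{S}_{\mathcal{B}}^c(H))/(\gamma_H-1)$ and $\mathcal{N}_3=\{x\in\mathcal{S}_{\mathcal{B}}(F)\cap\mathcal{S}_{\mathcal{B}}(H):F(x)\neq G_{pl}(x),\ G_{pl}(x)=H(x)\}$. Then $$Q(\mathcal{N}_3)\le q+Q\big(\mathcal{S}_{\mathcal{B}}^c(F)\cup\mathcal{S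}_{\mathcal{B}}^c(H)\big)+Q(\mathcal{M}_{pl}(F))-Q(\mathcal{M}(G_{pl})).$$
   Context: All sets are assumed measurable. *)

From HB Require Import structures.
From mathcomp Require Import all_boot all_order all_algebra.
From mathcomp Require Import all_classical all_reals all_analysis.
Set Implicit Arguments. Unset Strict Implicit. Unset Printing Implicit Defensive.
Import Order.TTheory GRing.Theory Num.Theory.
Local Open Scope classical_set_scope.
Local Open Scope ring_scope.

(* A classifier X -> [K] (labels encoded as 'I_K) is measurable iff every
   label class is measurable (the codomain is discrete). *)
Definition measurable_classifier d (T : measurableType d) (K : nat)
  (f : T -> 'I_K) : Prop := forall k : 'I_K, measurable (f @^-1` [set k]).

Definition nbhdB (T : Type) (B : T -> set T) (V : set T) : set T :=
  [set x | exists2 x', V x' & B x `&` B x' !=set0].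

Definition robust_set (T : Type) (K : nat) (B : T -> set T) (F : T -> 'I_K)
  : set T := [set x | forall x', B x x' -> F x = F x'].

Definition pr d (T : measurableType d) (R : realType)
  (Q : probability T R) (A : set T) : R := fine (Q A).

Definition c_expansion d (T : measurableType d) (R : realType)
  (Q : probability T R) (B : T -> set T) (c : R -> R) : Prop :=
  forall S : set T, measurable S ->
    c (pr Q S) * pr Q S <= pr Q (nbhdB B S).

From HB Require Import structures.
From mathcomp Require Import all_boot all_order all_algebra.
From mathcomp Require Import all_classical all_reals all_analysis.
From mathcomp Require Import lra.
Import Order.TTheory GRing.Theory Num.Theory.
Local Open Scope classical_set_scope.
Local Open Scope ring_scope.

(* Let U = M_pl(F) ∪ S^c(F) ∪ S^c(H) and S = M(G_pl) \ U.  Outside U, G_pl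
   agrees with F and both F and H are constant on balls, so a point whose ball
   meets the ball of a point of S is itself mislabeled by G_pl: N(S) ⊆ S ∪ U.
   As Q(S) ≤ Q(M(G_pl)) and c is non-increasing, expansion gives
   γ_H Q(S) ≤ Q(N(S)) ≤ Q(S) + Q(U), i.e. Q(S) ≤ q.  The bound then follows
   from N_3 ⊆ M_pl(F) \ M(G_pl) and
   M(G_pl) ⊆ S ∪ (M(G_pl) ∩ M_pl(F)) ∪ S^c(F) ∪ S^c(H). *)

Section probability_mass.
Context {d} {T : measurableType d} {R : realType} (Q : probability T R).

Lemma prE {A : set T} : measurable A -> Q A = (pr Q A)%:E.
Proof. by move=> mA; rewrite /pr fineK //; apply: fin_num_measure. Qed.

Lemma pr_ge0 (A : set T) : 0 <= pr Q A.
Proof. exact: fine_ge0. Qed.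

Lemma pr_le1 {A : set T} : measurable A -> pr Q A <= 1.
Proof. by move=> mA; rewrite -lee_fin -prE //; apply: probability_le1. Qed.

Lemma le_pr {A C : set T} : measurable A -> measurable C -> A `<=` C ->
  pr Q A <= pr Q C.
Proof.
by move=> mA mC AC; rewrite -lee_fin -!prE //; apply: le_measure; rewrite ?inE.
Qed.

Lemma prU2 {A C : set T} : measurable A -> measurable C ->
  pr Q (A `|` C) <= pr Q A + pr Q C.
Proof.
move=> mA mC; rewrite -lee_fin EFinD -!prE //; last exact: measurableU.
exact: measureU2.
Qed.

Lemma prD {A C : set T} : measurable A -> measurable C ->
  pr Q (A `\` C) = pr Q A - pr Q (A `&` C).
Proof.
move=> mA mC; apply: EFin_inj; rewrite EFinB -!prE //;
  [|exact: measurableI|exact: measurableD].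
by rewrite measureD // (le_lt_trans (probability_le1 Q mA)) ?ltry.
Qed.

Lemma pr_le_setDU {A C D : set T} :
  measurable A -> measurable C -> measurable D ->
  pr Q A <= pr Q (A `\` (C `|` D)) + pr Q (A `&` C) + pr Q D.
Proof.
move=> mA mC mD.
have mAC : measurable (A `&` C) by exact: measurableI.
have mAD : measurable (A `\` (C `|` D)).
  by apply: measurableD => //; exact: measurableU.
have A_sub : A `<=` A `\` (C `|` D) `|` A `&` C `|` D.
  move=> x Ax; have [[Cx|Dx]|nCD] := pselect ((C `|` D) x).
  - by left; right.
  - by right.
  - by left; left.
apply: le_trans (le_pr mA _ A_sub) _ => //; first by do 2?apply: measurableU.
apply: le_trans (prU2 _ mD) _; first exact: measurableU.
by rewrite lerD2r; apply: prU2.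
Qed.

Lemma expansion_pr_le {B : T -> set T} {c : R -> R} {gamma : R} {S U : set T} :
  c_expansion Q B c -> measurable S -> measurable U ->
  measurable (nbhdB B S) -> nbhdB B S `<=` S `|` U ->
  1 < gamma -> gamma <= c (pr Q S) ->
  pr Q S <= pr Q U / (gamma - 1).
Proof.
move=> hexp mS mU mN NS gamma_gt1 gamma_le.
have expS := hexp S mS.
have NS_le : pr Q (nbhdB B S) <= pr Q S + pr Q U.
  by apply: le_trans (prU2 mS mU); apply: le_pr => //; exact: measurableU.
have gammaS_le : gamma * pr Q S <= c (pr Q S) * pr Q S.
  by apply: ler_wpM2r => //; exact: pr_ge0.
rewrite ler_pdivlMr ?subr_gt0 //; lra.
Qed.

End probability_mass.

Lemma measurable_classifier_neq d (T : measurableType d) (K : nat)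
    (f g : T -> 'I_K) :
  measurable_classifier f -> measurable_classifier g ->
  measurable [set x | f x <> g x].
Proof.
move=> mf mg.
have -> : [set x | f x <> g x] =
    ~` \bigcup_(k in [set: 'I_K]) (f @^-1` [set k] `&` g @^-1` [set k]).
  apply/seteqP; split => x /=.
    by move=> fg [k _ [/= fk gk]]; apply: fg; rewrite fk gk.
  by move=> fg_eq fg; apply: fg_eq; exists (f x).
apply: measurableC; apply: fin_bigcup_measurable => // k _.
exact: measurableI.
Qed.

Lemma nbhdB_mislabeled (T : Type) (K : nat) (B : T -> set T)
    (F H G : T -> 'I_K) (U : set T) :
  (forall x, ~ U x -> [/\ F x = G x, robust_set B F x & robust_set B H x]) ->
  nbhdB B ([set x | G x <> H x] `\` U) `<=` [set x | G x <> H x] `\` U `|` U.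
Proof.
move=> good x [x' [Mx' nUx'] [z [Bxz Bx'z]]].
have [Ux|nUx] := pselect (U x); [by right|left; split=> //].
have [FGx SFx SHx] := good x nUx; have [FGx' SFx' SHx'] := good x' nUx'.
rewrite /= -FGx (SFx z Bxz) (SHx z Bxz) -(SFx' z Bx'z) -(SHx' z Bx'z) FGx'.
exact: Mx'.
Qed.

Theorem mainTheorem4 (d : measure_display) (T : measurableType d)
  (R : realType) (K : nat) (hK : (0 < K)%N)
  (B : T -> set T) (Q : probability T R) (c : R -> R)
  (c_pos : forall t, 0 <= t <= 1 -> 0 < c t)
  (c_noninc : forall s t, 0 <= s -> s <= t -> t <= 1 -> c t <= c s)
  (N_meas : forall S : set T, measurable S -> measurable (nbhdB B S))
  (hexp : c_expansion Q B c)
  (F H Gpl : T -> 'I_K)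
  (mF : measurable_classifier F) (mH : measurable_classifier H)
  (mG : measurable_classifier Gpl)
  (mSF : measurable (robust_set B F)) (mSH : measurable (robust_set B H)) :
  let gammaH := c (pr Q [set x | Gpl x <> H x]) in
  1 < gammaH ->
  let SF := robust_set B F in
  let SH := robust_set B H in
  let MG := [set x | Gpl x <> H x] in
  let MplF := [set x | F x <> Gpl x] in
  let q := pr Q (MplF `|` ~` SF `|` ~` SH) / (gammaH - 1) in
  let N3 := [set x | SF x /\ SH x /\ F x <> Gpl x /\ Gpl x = H x] in
  pr Q N3 <= q + pr Q (~` SF `|` ~` SH) + pr Q MplF - pr Q MG.
Proof.
move=> gammaH gammaH_gt1; rewrite /is_true; cbv zeta; apply/idP.
set SF := robust_set B F; set SH := robust_set B H.
set MG := [set x | Gpl x <> H x]; set MplF := [set x | F x <> Gpl x].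
set N3 := [set x | SF x /\ SH x /\ F x <> Gpl x /\ Gpl x = H x].
have mMG : measurable MG by exact: measurable_classifier_neq.
have mMplF : measurable MplF by exact: measurable_classifier_neq.
have mV : measurable (~` SF `|` ~` SH).
  by apply: measurableU; exact: measurableC.
pose U := MplF `|` ~` SF `|` ~` SH.
have mU : measurable U by rewrite /U -setUA; exact: measurableU.
have mS : measurable (MG `\` U) by exact: measurableD.
have NS : nbhdB B (MG `\` U) `<=` MG `\` U `|` U.
  apply: (@nbhdB_mislabeled _ _ _ F) => x nUx.
  by split; apply: contrapT => ?; apply: nUx; [left; left|left; right|right].
have gammaH_le : gammaH <= c (pr Q (MG `\` U)).
  apply: c_noninc; [exact: pr_ge0| |exact: pr_le1].
  exact: (le_pr Q mS mMG (@subDsetl _ _ _)).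
have S_le_q :=
  expansion_pr_le Q hexp mS mU (N_meas _ mS) NS gammaH_gt1 gammaH_le.
have N3_sub : N3 `<=` MplF `\` MG.
  by move=> x [_ [_ [FG GH]]]; split => // /=; apply.
have mN3 : measurable N3.
  suff -> : N3 = SF `&` SH `&` (MplF `\` MG).
    by apply: measurableI; [exact: measurableI|exact: measurableD].
  apply/seteqP; split => [x N3x|x [[SFx SHx] [MplFx /contrapT]]] //.
  by split; [split|apply: N3_sub]; case: N3x => [? []].
have := le_pr Q mN3 (measurableD mMplF mMG) N3_sub.
rewrite prD // setIC.
have := pr_le_setDU Q mMG mMplF mV.
rewrite setUA -/U; lra.
Qed.
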